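(* For $c>0$ let $\mathfrak{C}_c$ be the catenoid of parameter $c$ described in the context and let $\Gamma_c=\mathfrak{C}_c\cap\{x_3=0\}$. Then, as $c\to+\infty$, $\Gamma_c$ converges uniformly to the origin, i.e. $\sup_{(x_1,x_2,0)\in\Gamma_c}\sqrt{x_1^2+x_2^2}\to0$.
   Context: $\widetilde{E(2)}$ is $\mathbb{R}^3$ with coordinates $(x_1,x_2,x_3)$ and group law $(a_1,b_1,c_1)*(a_2,b_2,c_2)=(a_1+a_2\cos c_1-b_2\sin c_1,\ b_1+a_2\sin c_1+b_2\cos c_1,\ c_1+c_2)$, with the left-invariant metric $\lambda_1^2(\cos x_3\,dx_1+\sin x_3\,dx_2)^2+\lambda_2^2(-\sin x_3\,dx_1+\cos x_3\,dx_2)^2+\frac{1}{\lambda_1^2\lambda_2^2}dx_3^2$, where either $\lambda_1>\lambda_2>0$ or $\lambda_1=\lambda_2=1$. For $c>0$: $\theta_c^+=\pi$ if $c>\sqrt2\lambda_1$, $\theta_c^+=\arccos(1-c^2/\lambda_1^2)$ if $0<c\le\sqrt2\lambda_1$; $\Omega=\{(c,\theta):c>0,\ |\theta|<\theta_c^+\}$. For $(c,\theta)\in\Omega$: $D=\sin\theta/c$; $\varphi$ is the global solution of $\varphi'(u)=\sqrt{c^2+2\cos\theta\,B(u)-D^2B(u)^2}$, $\varphi(0)=0$, with $B(u)=\lambda_1^2\cos^2\varphi(u)+\lambda_2^2\sin^2\varphi(u)$; $U>0$ is the unique number with $\varphi(U)=\pi$; $f$ solves $f'=DB$, $f(0)=0$;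 $G(u)=\int_0^u\frac{c-\varphi'(s)}{B(s)}ds$; $H(c,\theta)=Df(U)+cG(U)$; $\widetilde{\theta_c}$ is the unique $\theta\in(0,\pi/2)\cap(0,\theta_c^+)$ with $H(c,\theta)=0$. The catenoid $\mathfrak{C}_c$ is the image of $X=(x_1,x_2,x_3):\mathbb{C}\to\widetilde{E(2)}$ built with $\theta=\widetilde{\theta_c}$: $x_3(u+iv)=-\lambda_1\lambda_2Dv+\lambda_1\lambda_2G(u)$; with $A=f(u)+cv$, $M_1=c\cos x_3\cosh A-\lambda_1\lambda_2D\sin x_3\sinh A$, $M_2=c\cos x_3\sinh A-\lambda_1\lambda_2D\sin x_3\cosh A$, $M_3=c\sin x_3\sinh A+\lambda_1\lambda_2D\cos x_3\cosh A$, $M_4=c\sin x_3\cosh A+\lambda_1\lambda_2D\cos x_3\sinh A$, $x_1=-\frac{1}{(c^2+\lambda_1^2\lambda_2^2D^2)B}[\frac{1}{\lambda_1}f'\cos\varphi\,M_1-\frac{1}{\lambda_1}(c-\varphi')\sin\varphi\,M_2-\frac{1}{\lambda_2}(c-\varphi')\cos\varphi\,M_3-\frac{1}{\lambda_2}f'\sin\varphi\,M_4]$, $x_2=-\frac{1}{(c^2+\lambda_1^2\lambda_2^2D^2)B}[\frac{1}{\lambda_1}f'\cos\varphi\,M_4-\frac{1}{\lambda_1}(c-\varphi')\sin\varphi\,M_3+\frac{1}{\lambda_2}(c-\varphi')\cos\varphi\,M_2+\frac{1}{\lambda_2}f'\sin\varphi\,M_1]$ (functions of $u$ evaluated at $u$).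 *)

From Stdlib Require Import Reals ClassicalEpsilon.
From Coquelicot Require Import Coquelicot.
Open Scope R_scope.

Definition theta_plus (l1 c : R) : R :=
  if Rlt_dec (sqrt 2 * l1) c then PI else acos (1 - c ^ 2 / l1 ^ 2).

Definition Dc (c th : R) : R := sin th / c.

Definition Bof (l1 l2 : R) (phi : R -> R) (u : R) : R :=
  l1 ^ 2 * (cos (phi u)) ^ 2 + l2 ^ 2 * (sin (phi u)) ^ 2.

Definition phi_rhs (l1 l2 c th : R) (phi : R -> R) (u : R) : R :=
  sqrt (c ^ 2 + 2 * cos th * Bof l1 l2 phi u - (Dc c th) ^ 2 * (Bof l1 l2 phi u) ^ 2).

Definition is_phi_sol (l1 l2 c th : R) (phi : R -> R) : Prop :=
  phi 0 = 0 /\ forall u, is_derive phi u (phi_rhs l1 l2 c th phi u).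

Definition phi_of (l1 l2 c th : R) : R -> R :=
  epsilon (inhabits (fun _ => 0)) (is_phi_sol l1 l2 c th).

Definition B_of (l1 l2 c th : R) (u : R) : R := Bof l1 l2 (phi_of l1 l2 c th) u.

Definition phid_of (l1 l2 c th : R) (u : R) : R :=
  phi_rhs l1 l2 c th (phi_of l1 l2 c th) u.

Definition U_of (l1 l2 c th : R) : R :=
  epsilon (inhabits 0) (fun U => 0 < U /\ phi_of l1 l2 c th U = PI).

Definition f_of (l1 l2 c th : R) (u : R) : R :=
  RInt (fun s => Dc c th * B_of l1 l2 c th s) 0 u.

Definition fd_of (l1 l2 c th : R) (u : R) : R := Dc c th * B_of l1 l2 c th u.

Definition G_of (l1 l2 c th : R) (u : R) : R :=
  RInt (fun s => (c - phid_of l1 l2 c th s) / B_of l1 l2 c th s) 0 u.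

Definition H_of (l1 l2 c th : R) : R :=
  Dc c th * f_of l1 l2 c th (U_of l1 l2 c th) + c * G_of l1 l2 c th (U_of l1 l2 c th).

Definition theta_tilde (l1 l2 c : R) : R :=
  epsilon (inhabits 0)
    (fun th => 0 < th < PI / 2 /\ th < theta_plus l1 c /\ H_of l1 l2 c th = 0).

(* The catenoid X = (x1,x2,x3) : C = R^2 -> E(2)~, built with theta = tilde theta_c *)
Section Catenoid.
Variables l1 l2 c u v : R.
Let th := theta_tilde l1 l2 c.
Let D := Dc c th.
Let ph := phi_of l1 l2 c th u.
Let ph' := phid_of l1 l2 c th u.
Let f := f_of l1 l2 c th u.
Let f' := fd_of l1 l2 c th u.
Let B := B_of l1 l2 c th u.
Let G := G_of l1 l2 c th u.

Definition cat_x3 : R := - (l1 * l2 * D * v) + l1 * l2 * G.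

Let x3 := cat_x3.
Let A := f + c * v.
Let M1 := c * cos x3 * cosh A - l1 * l2 * D * sin x3 * sinh A.
Let M2 := c * cos x3 * sinh A - l1 * l2 * D * sin x3 * cosh A.
Let M3 := c * sin x3 * sinh A + l1 * l2 * D * cos x3 * cosh A.
Let M4 := c * sin x3 * cosh A + l1 * l2 * D * cos x3 * sinh A.
Let K := - / ((c ^ 2 + l1 ^ 2 * l2 ^ 2 * D ^ 2) * B).

Definition cat_x1 : R :=
  K * (/ l1 * f' * cos ph * M1 - / l1 * (c - ph') * sin ph * M2
       - / l2 * (c - ph') * cos ph * M3 - / l2 * f' * sin ph * M4).

Definition cat_x2 : R :=
  K * (/ l1 * f' * cos ph * M4 - / l1 * (c - ph') * sin ph * M3
       + / l2 * (c - ph') * cos ph * M2 + / l2 * f' * sin ph * M1).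
End Catenoid.

(* Since phi' >= c/2 > 0, phi is invertible, and the substitution phi = phi(u)
   turns D f(u) + c G(u) into Psi(phi(u)), where Psi is the primitive of a
   pi-periodic integrand h whose integral over [0, pi] is H(c, theta).
   Writing h = P - Q with P, Q >= 0 and P = O(D^2 / c), the condition H = 0
   makes Psi periodic and bounded by pi sup P.  On {x3 = 0} we have
   D v = G(u), so the argument A = f(u) + c v of cosh and sinh is
   Psi(phi(u)) / D = O(D / c) = O(1 / c^2).  The remaining factors f' and
   c - phi' are O(1/c) and the prefactor is O(1/c^2), whence x1, x2 = O(1/c^2).
   The angle theta~ exists by the intermediate value theorem, since
   H(c, pi/3) < 0 < H(c, pi/2) for large c. *)

From Stdlib Require Import Reals Lra ClassicalEpsilon Ranalysis5.
From Coquelicot Require Import Coquelicot.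
Open Scope R_scope.

(** * Calculus on the real line *)

Lemma increment_bounds_of_derive (f df : R -> R) (m M a b : R) :
  (forall x, is_derive f x (df x)) -> (forall x, m <= df x <= M) -> a <= b ->
  m * (b - a) <= f b - f a <= M * (b - a).
Proof.
  intros Hd Hb Hab.
  destruct (MVT_gen f a b df) as [z [_ ->]].
  - intros x _; apply Hd.
  - intros x _; apply continuity_pt_filterlim, (ex_derive_continuous f).
    eexists; apply Hd.
  - destruct (Hb z); split; nra.
Qed.

Lemma Rabs_sub_le_of_derive (f df : R -> R) (L a b : R) :
  (forall x, is_derive f x (df x)) -> (forall x, Rabs (df x) <= L) ->
  Rabs (f a - f b) <= L * Rabs (a - b).
Proof.
  intros Hd Hb.
  assert (Hb' : forall x, - L <= df x <= L) by (intros x; apply Rabs_le_between, Hb).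
  destruct (Rle_lt_dec a b) as [Hab | Hab].
  - pose proof (increment_bounds_of_derive f df (- L) L a b Hd Hb' Hab).
    rewrite (Rabs_left1 (a - b)) by lra; apply Rabs_le_between; lra.
  - pose proof (increment_bounds_of_derive f df (- L) L b a Hd Hb' (Rlt_le _ _ Hab)).
    rewrite (Rabs_right (a - b)) by lra; apply Rabs_le_between; lra.
Qed.

Lemma eq_of_derive_eq (f g df dg : R -> R) (a : R) :
  (forall x, is_derive f x (df x)) -> (forall x, is_derive g x (dg x)) ->
  (forall x, df x = dg x) -> f a = g a -> forall x, f x = g x.
Proof.
  intros Hf Hg Hfg Ha x.
  assert (Hd : forall y, is_derive (fun y => f y - g y) y 0).
  { intros y; replace 0 with (df y - dg y) by (rewrite Hfg; ring).
    exact (is_derive_minus f g y _ _ (Hf y) (Hg y)). }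
  assert (Hzero : forall y : R, 0 <= 0 <= 0) by (intros; lra).
  destruct (Rle_lt_dec a x) as [Hax | Hax].
  - pose proof (increment_bounds_of_derive _ _ 0 0 a x Hd Hzero Hax); lra.
  - pose proof (increment_bounds_of_derive _ _ 0 0 x a Hd Hzero (Rlt_le _ _ Hax)); lra.
Qed.

Lemma lipschitz_continuity (f : R -> R) (L : R) :
  (forall x y, Rabs (f x - f y) <= L * Rabs (x - y)) -> continuity f.
Proof.
  intros Hf x e He.
  assert (HL : 0 <= L).
  { specialize (Hf (x + 1) x); replace (x + 1 - x) with 1 in Hf by ring.
    rewrite Rabs_R1 in Hf; pose proof (Rabs_pos (f (x + 1) - f x)); lra. }
  exists (e / (L + 1)); split; [apply Rdiv_lt_0_compat; lra|].
  intros y [_ Hy]; simpl in *; unfold R_dist in *.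
  apply Rle_lt_trans with (L * Rabs (y - x)); [apply Hf|].
  apply Rle_lt_trans with ((L + 1) * Rabs (y - x)); [pose proof (Rabs_pos (y - x)); nra|].
  apply (Rmult_lt_compat_l (L + 1)) in Hy; [|lra].
  replace ((L + 1) * (e / (L + 1))) with e in Hy by (field; lra); exact Hy.
Qed.

Lemma RInt_point_0 (g : R -> R) (a : R) : RInt g a a = 0.
Proof. exact (RInt_point (V := R_CompleteNormedModule) a g). Qed.

Lemma ex_RInt_of_continuous (g : R -> R) (a b : R) :
  (forall y, continuous g y) -> ex_RInt g a b.
Proof. intros Hc; apply (@ex_RInt_continuous R_CompleteNormedModule); auto. Qed.

Lemma is_derive_RInt_upper (g : R -> R) (x : R) :
  (forall y, continuous g y) -> is_derive (fun y => RInt g 0 y) x (g x).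
Proof.
  intros Hc; apply (is_derive_RInt g _ 0 x); [|apply Hc].
  apply filter_forall; intros y.
  apply (RInt_correct (V := R_CompleteNormedModule)), ex_RInt_of_continuous, Hc.
Qed.

Lemma RInt_nonneg_between (g : R -> R) (y p : R) :
  (forall x, continuous g x) -> (forall x, 0 <= g x) -> 0 <= y <= p ->
  0 <= RInt g 0 y <= RInt g 0 p.
Proof.
  intros Hc Hp Hy.
  assert (Hpos : forall a b, a <= b -> 0 <= RInt g a b)
    by (intros a b Hab; apply RInt_ge_0; auto using ex_RInt_of_continuous).
  split; [apply Hpos; lra|].
  assert (E : RInt g 0 y + RInt g y p = RInt g 0 p)
    by (apply (RInt_Chasles (V := R_CompleteNormedModule)); apply ex_RInt_of_continuous, Hc).
  pose proof (Hpos y p ltac:(lra)); lra.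
Qed.

Lemma RInt_add_period (g : R -> R) (p x : R) :
  (forall y, continuous g y) -> (forall y, g (y + p) = g y) ->
  RInt g 0 (x + p) = RInt g 0 x + RInt g 0 p.
Proof.
  intros Hc Hper; revert x.
  apply (eq_of_derive_eq _ _ (fun x => 1 * g (x + p)) g 0).
  - intros x; apply (is_derive_comp (fun y => RInt g 0 y) (fun x => x + p)).
    + apply is_derive_RInt_upper, Hc.
    + auto_derive; auto; ring.
  - intros x; replace (g x) with (g x + 0) by ring.
    apply (is_derive_plus (fun y => RInt g 0 y) (fun _ => RInt g 0 p)).
    + apply is_derive_RInt_upper, Hc.
    + exact (@is_derive_const R_AbsRing R_NormedModule _ x).
  - intros x; rewrite Hper; ring.
  - rewrite Rplus_0_l, RInt_point; symmetry; apply Rplus_0_l.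
Qed.

Lemma periodic_value_in_period (h : R -> R) (p : R) :
  0 < p -> (forall x, h (x + p) = h x) ->
  forall x, exists y, 0 <= y <= p /\ h x = h y.
Proof.
  intros Hp Hper.
  assert (Hnonneg : forall n x, 0 <= x <= INR n * p -> exists y, 0 <= y <= p /\ h x = h y).
  { induction n as [|n IH]; intros x Hx.
    - exists x; simpl in Hx; split; [lra | reflexivity].
    - destruct (Rle_lt_dec x p) as [Hxp | Hxp]; [exists x; split; [lra | reflexivity]|].
      rewrite S_INR in Hx; destruct (IH (x - p)) as [y [Hy E]]; [lra|].
      exists y; split; [exact Hy|].
      rewrite <- E, <- (Hper (x - p)); f_equal; ring. }
  assert (Hshift : forall n x, h (x + INR n * p) = h x).
  { induction n as [|n IH]; intros x; [simpl; f_equal; ring|].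
    rewrite S_INR, <- (IH x), <- (Hper (x + INR n * p)); f_equal; ring. }
  intros x; destruct (INR_archimed p (Rabs x) Hp) as [n Hn].
  rewrite <- (Hshift n x); apply (Hnonneg (2 * n)%nat).
  rewrite mult_INR; simpl (INR 2).
  pose proof (Rle_abs x); pose proof (Rle_abs (- x)); rewrite Rabs_Ropp in *; nra.
Qed.

Lemma Rabs_RInt_sub_le_of_balanced (P Q : R -> R) (p K y : R) :
  (forall x, continuous P x) -> (forall x, continuous Q x) ->
  (forall x, 0 <= P x <= K) -> (forall x, 0 <= Q x) ->
  RInt P 0 p = RInt Q 0 p -> 0 <= y <= p ->
  Rabs (RInt P 0 y - RInt Q 0 y) <= p * K.
Proof.
  intros HPc HQc HP HQ Hbal Hy.
  pose proof (RInt_nonneg_between P y p HPc (fun x => proj1 (HP x)) Hy).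
  pose proof (RInt_nonneg_between Q y p HQc HQ Hy).
  assert (RInt P 0 p <= p * K).
  { eapply Rle_trans; [apply Rle_abs|]; replace p with (p - 0) at 2 by ring.
    apply abs_RInt_le_const; [lra | apply ex_RInt_of_continuous, HPc|].
    intros t _; rewrite Rabs_right; [apply HP | apply Rle_ge, HP]. }
  apply Rabs_le_between; lra.
Qed.

Lemma continuity_RInt_param (h : R -> R -> R) (L a b : R) : a <= b ->
  (forall t x, continuous (h t) x) ->
  (forall t1 t2 x, Rabs (h t1 x - h t2 x) <= L * Rabs (t1 - t2)) ->
  continuity (fun t => RInt (h t) a b).
Proof.
  intros Hab Hc Hlip; apply (lipschitz_continuity _ ((b - a) * L)); intros t1 t2.
  rewrite Rmult_assoc, <- (RInt_minus (V := R_CompleteNormedModule))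
    by apply ex_RInt_of_continuous, Hc.
  apply abs_RInt_le_const; [exact Hab | |intros; apply Hlip].
  apply (ex_RInt_minus (V := R_CompleteNormedModule)); apply ex_RInt_of_continuous, Hc.
Qed.

Lemma sin_sq_le_1 x : sin x ^ 2 <= 1.
Proof. pose proof (sin2_cos2 x); unfold Rsqr in *; nra. Qed.

Lemma Rabs_div_le (a b A m : R) : 0 < m <= b -> Rabs a <= A -> Rabs (a / b) <= A / m.
Proof.
  intros Hm Ha; unfold Rdiv; rewrite Rabs_mult, (Rabs_right (/ b))
    by (left; apply Rinv_0_lt_compat; lra).
  apply Rmult_le_compat; [apply Rabs_pos | left; apply Rinv_0_lt_compat; lra | exact Ha|].
  apply Rinv_le_contravar; lra.
Qed.

Lemma sin_sq_lipschitz t1 t2 : Rabs (sin t1 ^ 2 - sin t2 ^ 2) <= 1 * Rabs (t1 - t2).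
Proof.
  apply (Rabs_sub_le_of_derive (fun t => sin t ^ 2) (fun t => 2 * sin t * cos t)).
  - intros t; auto_derive; [exact I | ring].
  - intros t; pose proof (sin2_cos2 t); unfold Rsqr in *.
    pose proof (pow2_ge_0 (sin t - cos t)); pose proof (pow2_ge_0 (sin t + cos t)).
    apply Rabs_le_between; split; nra.
Qed.

Lemma cos_lipschitz t1 t2 : Rabs (cos t1 - cos t2) <= 1 * Rabs (t1 - t2).
Proof.
  apply (Rabs_sub_le_of_derive cos (fun t => - sin t)).
  - intros t; auto_derive; [exact I | ring].
  - intros t; rewrite Rabs_Ropp; apply Rabs_le_between, SIN_bound.
Qed.

Lemma Rabs_mul3_le (a b d A B E : R) :
  Rabs a <= A -> Rabs b <= B -> Rabs d <= E -> Rabs (a * b * d) <= A * B * E.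
Proof.
  intros; rewrite !Rabs_mult.
  apply Rmult_le_compat; [apply Rmult_le_pos; apply Rabs_pos | apply Rabs_pos | |assumption].
  apply Rmult_le_compat; [apply Rabs_pos | apply Rabs_pos | assumption | assumption].
Qed.

Lemma Rabs_lincomb4_le (K a1 a2 a3 a4 b1 b2 b3 b4 k M : R) :
  Rabs K <= k -> Rabs a1 <= M -> Rabs a2 <= M -> Rabs a3 <= M -> Rabs a4 <= M ->
  Rabs (K * (a1 * b1 + a2 * b2 + a3 * b3 + a4 * b4))
    <= k * M * (Rabs b1 + Rabs b2 + Rabs b3 + Rabs b4).
Proof.
  intros HK H1 H2 H3 H4.
  assert (Hterm : forall a b, Rabs a <= M -> Rabs (a * b) <= M * Rabs b)
    by (intros a b Ha; rewrite Rabs_mult; apply Rmult_le_compat_r; [apply Rabs_pos | exact Ha]).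
  rewrite Rabs_mult, Rmult_assoc.
  apply Rmult_le_compat; [apply Rabs_pos | apply Rabs_pos | exact HK|].
  pose proof (Hterm a1 b1 H1); pose proof (Hterm a2 b2 H2).
  pose proof (Hterm a3 b3 H3); pose proof (Hterm a4 b4 H4).
  pose proof (Rabs_triang (a1 * b1 + a2 * b2 + a3 * b3) (a4 * b4)).
  pose proof (Rabs_triang (a1 * b1 + a2 * b2) (a3 * b3)).
  pose proof (Rabs_triang (a1 * b1) (a2 * b2)).
  lra.
Qed.

Lemma cosh_sinh_bound a : Rabs a <= 1 -> Rabs (cosh a) <= 3 /\ Rabs (sinh a) <= 3.
Proof.
  intros Ha; apply Rabs_le_between in Ha.
  assert (He : forall b, b <= 1 -> 0 < exp b <= 3).
  { intros b Hb; split; [apply exp_pos|]; apply Rle_trans with (exp 1); [|exact exp_le_3].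
    destruct Hb as [Hb | ->]; [left; apply exp_increasing, Hb | lra]. }
  pose proof (He a ltac:(lra)); pose proof (He (- a) ltac:(lra)).
  unfold cosh, sinh; split; apply Rabs_le_between; lra.
Qed.

Lemma sqrt_sum_sq_le (x y b : R) :
  Rabs x <= b -> Rabs y <= b -> sqrt (x ^ 2 + y ^ 2) <= 2 * b.
Proof.
  intros Hx Hy; eapply Rle_trans; [apply sqrt_plus_sqr|].
  assert (Hs : sqrt 2 <= 2)
    by (pose proof (sqrt_sqrt 2 ltac:(lra)); pose proof (sqrt_pos 2); nra).
  apply Rmult_le_compat; [apply sqrt_pos | | exact Hs | apply Rmax_lub; assumption].
  apply Rle_trans with (Rabs x); [apply Rabs_pos | apply Rmax_l].
Qed.

(** * Autonomous equations phi' = F(phi) with F bounded away from 0 *)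

Section AutonomousODE.

Variables (F : R -> R) (m M : R).
Hypothesis F_cont : forall x, continuous F x.
Hypothesis m_pos : 0 < m.
Hypothesis F_bounds : forall x, m <= F x <= M.

(* The time a solution needs to travel from 0 to x; solutions are its inverses. *)
Definition ode_time (x : R) : R := RInt (fun t => / F t) 0 x.

Lemma ode_time_derive x : is_derive ode_time x (/ F x).
Proof.
  apply (is_derive_RInt_upper (fun t => / F t)); intros y.
  apply (continuous_Rinv_comp F); [apply F_cont|]; pose proof (F_bounds y); lra.
Qed.

Lemma ode_time_increment a b : a <= b ->
  (b - a) / M <= ode_time b - ode_time a <= (b - a) / m.
Proof.
  intros Hab.
  assert (HF : forall x, / M <= / F x <= / m).
  { intros x; destruct (F_bounds x); split; apply Rinv_le_contravar; lra. }
  pose proof (increment_bounds_of_derive _ _ _ _ a b ode_time_derive HF Hab).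
  unfold Rdiv; lra.
Qed.

Lemma ode_time_lt a b : a < b -> ode_time a < ode_time b.
Proof.
  intros Hab; destruct (ode_time_increment a b (Rlt_le _ _ Hab)) as [H _].
  assert (0 < (b - a) / M) by (pose proof (F_bounds 0); apply Rdiv_lt_0_compat; lra).
  lra.
Qed.

Lemma ode_time_inj a b : ode_time a = ode_time b -> a = b.
Proof.
  intros E; destruct (Rtotal_order a b) as [H | [H | H]]; auto;
    apply ode_time_lt in H; lra.
Qed.

Lemma ode_time_0 : ode_time 0 = 0.
Proof. apply RInt_point_0. Qed.

Lemma ode_time_continuity : continuity ode_time.
Proof.
  intros x; apply continuity_pt_filterlim, (ex_derive_continuous ode_time).
  eexists; apply ode_time_derive.
Qed.

Lemma ode_time_surj u : exists x, ode_time x = u.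
Proof.
  assert (HM : 0 < M) by (pose proof (F_bounds 0); lra).
  set (r := M * Rabs u).
  assert (Hr : 0 <= r) by (unfold r; pose proof (Rabs_pos u); nra).
  assert (Hu : (r - 0) / M = Rabs u /\ (0 - - r) / M = Rabs u)
    by (unfold r; split; field; lra).
  pose proof (ode_time_increment 0 r Hr) as [Hup _].
  pose proof (ode_time_increment (- r) 0 ltac:(lra)) as [Hlow _].
  rewrite ode_time_0 in Hup, Hlow.
  pose proof (Rle_abs u); pose proof (Rle_abs (- u)); rewrite Rabs_Ropp in *.
  destruct (IVT_gen ode_time (- r) r u ode_time_continuity) as [x [_ Hx]].
  - split.
    + apply Rle_trans with (ode_time (- r)); [apply Rmin_l | lra].
    + apply Rle_trans with (ode_time r); [lra | apply Rmax_r].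
  - exists x; exact Hx.
Qed.

Section RightInverse.

Variable g : R -> R.
Hypothesis g_right_inverse : forall u, ode_time (g u) = u.

Lemma right_inverse_mono a b : a <= b -> g a <= g b.
Proof.
  intros Hab; destruct (Rle_lt_dec (g a) (g b)) as [H | H]; [exact H|].
  apply ode_time_lt in H; rewrite !g_right_inverse in H; lra.
Qed.

Lemma right_inverse_lipschitz a b : Rabs (g a - g b) <= M * Rabs (a - b).
Proof.
  assert (HM : 0 < M) by (pose proof (F_bounds 0); lra).
  assert (Hle : forall a b, a <= b -> g b - g a <= M * (b - a)).
  { intros a' b' Hab; pose proof (ode_time_increment _ _ (right_inverse_mono a' b' Hab)) as [H _].
    rewrite !g_right_inverse in H; apply Rmult_le_compat_l with (r := M) in H; [|lra].
    replace (M * ((g b' - g a') / M)) with (g b' - g a') in H by (field; lra); exact H. }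
  destruct (Rle_lt_dec a b) as [Hab | Hab].
  - pose proof (Hle a b Hab); pose proof (right_inverse_mono a b Hab).
    rewrite Rabs_left1, (Rabs_left1 (a - b)) by lra; lra.
  - pose proof (Hle b a (Rlt_le _ _ Hab)); pose proof (right_inverse_mono b a (Rlt_le _ _ Hab)).
    rewrite Rabs_right, (Rabs_right (a - b)) by lra; lra.
Qed.

Lemma right_inverse_derive u : is_derive g u (F (g u)).
Proof.
  assert (Hder : forall a, derivable_pt ode_time a)
    by (intros a; exists (/ F a); apply is_derive_Reals, ode_time_derive).
  assert (Hinc : g (u - 1) <= g u <= g (u + 1)) by (split; apply right_inverse_mono; lra).
  pose proof (derivable_pt_lim_recip_interv ode_time g (u - 1) (u + 1) u (fun a _ => Hder a)
    (lipschitz_continuity g M right_inverse_lipschitz u) ltac:(lra) ltac:(lra) Hinc) as K.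
  assert (E : derive_pt ode_time (g u) (Hder (g u)) = / F (g u))
    by (apply derive_pt_eq_0, is_derive_Reals, ode_time_derive).
  pose proof (F_bounds (g u)).
  cbv beta in K; rewrite E in K.
  apply is_derive_Reals; replace (F (g u)) with (1 / / F (g u)) by (field; lra).
  apply K; [intros y _; apply g_right_inverse | apply Rinv_neq_0_compat; lra].
Qed.

End RightInverse.

Lemma ode_solution_exists :
  exists phi, phi 0 = 0 /\ forall u, is_derive phi u (F (phi u)).
Proof.
  destruct (choice _ ode_time_surj) as [g Hg].
  exists g; split; [|apply right_inverse_derive, Hg].
  apply ode_time_inj; rewrite Hg, ode_time_0; reflexivity.
Qed.

Lemma ode_time_solution (phi : R -> R) :
  phi 0 = 0 -> (forall u, is_derive phi u (F (phi u))) ->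
  forall u, ode_time (phi u) = u.
Proof.
  intros H0 Hphi.
  apply (eq_of_derive_eq _ _ (fun u => F (phi u) * / F (phi u)) (fun _ => 1) 0).
  - intros u; apply (is_derive_comp ode_time phi); [apply ode_time_derive | apply Hphi].
  - intros u; apply (is_derive_id (K := R_AbsRing)).
  - intros u; pose proof (F_bounds (phi u)); field; lra.
  - rewrite H0; apply ode_time_0.
Qed.

End AutonomousODE.

(** * The integrand of H *)

(* B, the radicand and phi' as functions of the angle phi instead of u:
   [B_of l1 l2 c th u] is [Bang l1 l2 (phi u)], [phid_of l1 l2 c th u] is
   [speed l1 l2 c th (phi u)]. *)
Definition Bang (l1 l2 x : R) : R := l1 ^ 2 * cos x ^ 2 + l2 ^ 2 * sin x ^ 2.

Definition speed2 (l1 l2 c th x : R) : R :=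
  c ^ 2 + 2 * cos th * Bang l1 l2 x - Dc c th ^ 2 * Bang l1 l2 x ^ 2.

Definition speed (l1 l2 c th x : R) : R := sqrt (speed2 l1 l2 c th x).

(* Substituting phi = phi(u) in D f(u) + c G(u) gives the integral of
   [H_integrand] from 0 to phi(u) (lemma [phase_of_phi]). *)
Definition H_integrand (l1 l2 c th x : R) : R :=
  Dc c th ^ 2 * Bang l1 l2 x / speed l1 l2 c th x
  + c * (c - speed l1 l2 c th x) / (Bang l1 l2 x * speed l1 l2 c th x).

(* From (c - phi')(c + phi') = D^2 B^2 - 2 B cos theta: the integrand is the
   difference of two nonnegative terms, of which only the first is small. *)
Definition H_integrand_pos (l1 l2 c th x : R) : R :=
  Dc c th ^ 2 * Bang l1 l2 x * (2 * c + speed l1 l2 c th x)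
  / (speed l1 l2 c th x * (c + speed l1 l2 c th x)).

Definition H_integrand_neg (l1 l2 c th x : R) : R :=
  2 * c * cos th / (speed l1 l2 c th x * (c + speed l1 l2 c th x)).

Definition phase (l1 l2 c th x : R) : R := RInt (H_integrand l1 l2 c th) 0 x.

Definition H_angle (l1 l2 c th : R) : R := phase l1 l2 c th PI.

Lemma Bang_add_PI l1 l2 x : Bang l1 l2 (x + PI) = Bang l1 l2 x.
Proof. unfold Bang; rewrite neg_cos, neg_sin; ring. Qed.

Lemma H_integrand_add_PI l1 l2 c th x :
  H_integrand l1 l2 c th (x + PI) = H_integrand l1 l2 c th x.
Proof. unfold H_integrand, speed, speed2; rewrite !Bang_add_PI; reflexivity. Qed.

(** * Estimates for large c *)

Section Catenoid.

Variables l1 l2 c : R.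
Hypothesis l2_pos : 0 < l2.
Hypothesis l2_le_l1 : l2 <= l1.
Hypothesis c_large : 4 + 4 * l1 ^ 2 <= c.

Local Notation B := (Bang l1 l2).
Local Notation F := (speed l1 l2 c).
Local Notation D := (Dc c).

Lemma Bang_bounds x : l2 ^ 2 <= B x <= l1 ^ 2.
Proof.
  unfold Bang; pose proof (sin2_cos2 x); unfold Rsqr in *.
  assert (0 <= cos x ^ 2) by nra; assert (0 <= sin x ^ 2) by nra.
  assert (l2 ^ 2 <= l1 ^ 2) by nra; split; nra.
Qed.

Lemma Bang_continuous x : continuous B x.
Proof. apply (ex_derive_continuous B); unfold Bang; auto_derive; exact I. Qed.

Lemma c_ge_4 : 4 <= c.
Proof. nra. Qed.

Lemma c_half_pos : 0 < c / 2.
Proof. pose proof c_ge_4; lra. Qed.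

Lemma Dc_sq_mul_c_sq th : D th ^ 2 * c ^ 2 = sin th ^ 2.
Proof. pose proof c_ge_4; unfold Dc; field; intro; lra. Qed.

Lemma Dc_abs_le th : Rabs (D th) <= 1 / c.
Proof.
  pose proof c_ge_4; unfold Dc, Rdiv.
  rewrite Rabs_mult, (Rabs_right (/ c)) by (left; apply Rinv_0_lt_compat; lra).
  rewrite Rmult_1_l; rewrite <- (Rmult_1_l (/ c)) at 2.
  apply Rmult_le_compat_r; [left; apply Rinv_0_lt_compat; lra|].
  apply Rabs_le_between, SIN_bound.
Qed.

Lemma Dc_sq_Bang_sq_le th x : D th ^ 2 * B x ^ 2 <= l1 ^ 2.
Proof.
  pose proof c_ge_4; pose proof (Bang_bounds x); pose proof (sin_sq_le_1 th).
  assert (HB : B x ^ 2 <= l1 ^ 2 * c ^ 2).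
  { assert (l1 ^ 2 <= c ^ 2) by nra.
    apply Rle_trans with (l1 ^ 2 * l1 ^ 2); [nra | apply Rmult_le_compat_l; nra]. }
  apply (Rmult_le_reg_r (c ^ 2)); [nra|].
  replace (D th ^ 2 * B x ^ 2 * c ^ 2) with (sin th ^ 2 * B x ^ 2)
    by (rewrite <- (Dc_sq_mul_c_sq th); ring).
  assert (0 <= B x ^ 2) by nra; nra.
Qed.

Lemma speed2_bounds th x : c ^ 2 / 4 <= speed2 l1 l2 c th x <= 4 * c ^ 2.
Proof.
  unfold speed2; pose proof c_ge_4; pose proof (Bang_bounds x).
  pose proof (Dc_sq_Bang_sq_le th x); pose proof (COS_bound th).
  assert (0 <= D th ^ 2 * B x ^ 2) by nra.
  assert (- B x <= cos th * B x <= B x) by nra.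
  split; nra.
Qed.

Lemma speed_sq th x : F th x ^ 2 = speed2 l1 l2 c th x.
Proof.
  unfold speed; rewrite <- Rsqr_pow2; apply Rsqr_sqrt.
  pose proof (speed2_bounds th x); pose proof c_ge_4; nra.
Qed.

Lemma speed_bounds th x : c / 2 <= F th x <= 2 * c.
Proof.
  pose proof (speed2_bounds th x); pose proof c_ge_4; unfold speed.
  split; [rewrite <- (sqrt_pow2 (c / 2)) by lra | rewrite <- (sqrt_pow2 (2 * c)) by lra];
    apply sqrt_le_1_alt; nra.
Qed.

Lemma speed_derivable th x : ex_derive (F th) x.
Proof.
  pose proof (speed2_bounds th x); pose proof c_ge_4.
  unfold speed, speed2, Bang in *; auto_derive; nra.
Qed.

Lemma speed_continuous th x : continuous (F th) x.
Proof. apply (ex_derive_continuous (F th)), speed_derivable. Qed.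

Lemma c_sub_speed_bound th x : Rabs (c - F th x) <= 3 * l1 ^ 2 / c.
Proof.
  pose proof c_ge_4; pose proof (speed_bounds th x); pose proof (speed_sq th x).
  pose proof (Bang_bounds x); pose proof (Dc_sq_Bang_sq_le th x); pose proof (COS_bound th).
  unfold speed2 in *.
  assert (E : (c - F th x) * (c + F th x) = D th ^ 2 * B x ^ 2 - 2 * cos th * B x) by nra.
  assert (HE : Rabs (c - F th x) * (c + F th x) <= 3 * l1 ^ 2).
  { rewrite <- (Rabs_right (c + F th x)) by lra; rewrite <- Rabs_mult, E.
    assert (0 <= D th ^ 2 * B x ^ 2) by nra.
    assert (- B x <= cos th * B x <= B x) by nra.
    apply Rabs_le_between; lra. }
  apply (Rmult_le_reg_r c); [lra|].
  unfold Rdiv; rewrite Rmult_assoc, Rinv_l, Rmult_1_r by lra.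
  pose proof (Rabs_pos (c - F th x)); nra.
Qed.

Lemma fd_of_bound th u : Rabs (fd_of l1 l2 c th u) <= l1 ^ 2 / c.
Proof.
  pose proof c_ge_4; pose proof (Bang_bounds (phi_of l1 l2 c th u)).
  unfold fd_of; change (B_of l1 l2 c th u) with (B (phi_of l1 l2 c th u)).
  rewrite Rabs_mult, (Rabs_right (B _)) by nra.
  replace (l1 ^ 2 / c) with (1 / c * l1 ^ 2) by (field; lra).
  apply Rmult_le_compat; [apply Rabs_pos | nra | apply Dc_abs_le | lra].
Qed.

Lemma H_integrand_split th x :
  H_integrand l1 l2 c th x = H_integrand_pos l1 l2 c th x - H_integrand_neg l1 l2 c th x.
Proof.
  pose proof c_ge_4; pose proof (speed_bounds th x); pose proof (speed_sq th x).
  pose proof (Bang_bounds x); unfold speed2 in *.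
  unfold H_integrand, H_integrand_pos, H_integrand_neg.
  replace (c - F th x) with ((D th ^ 2 * B x ^ 2 - 2 * cos th * B x) / (c + F th x))
    by (field_simplify_eq; nra).
  field; repeat split; nra.
Qed.

Lemma H_integrand_pos_bounds th x :
  0 <= H_integrand_pos l1 l2 c th x <= 4 * D th ^ 2 * l1 ^ 2 / c.
Proof.
  pose proof c_ge_4; pose proof (speed_bounds th x); pose proof (Bang_bounds x).
  unfold H_integrand_pos.
  assert (HD : 0 <= D th ^ 2) by nra.
  assert (Hden : 0 < F th x * (c + F th x)) by nra.
  split; [apply Rdiv_le_0_compat; [apply Rmult_le_pos|]; nra|].
  assert (Hq : B x * (2 * c + F th x) / (F th x * (c + F th x)) <= 4 * l1 ^ 2 / c).
  { apply Rle_div_l; [exact Hden|].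
    replace (4 * l1 ^ 2 / c * (F th x * (c + F th x)))
      with (l1 ^ 2 * (4 * F th x * (c + F th x) / c)) by (field; lra).
    apply Rmult_le_compat; [nra | nra | lra|].
    apply Rle_div_r; nra. }
  replace (D th ^ 2 * B x * (2 * c + F th x) / (F th x * (c + F th x)))
    with (D th ^ 2 * (B x * (2 * c + F th x) / (F th x * (c + F th x)))) by (unfold Rdiv; ring).
  replace (4 * D th ^ 2 * l1 ^ 2 / c) with (D th ^ 2 * (4 * l1 ^ 2 / c)) by (unfold Rdiv; ring).
  apply Rmult_le_compat_l; assumption.
Qed.

Lemma H_integrand_neg_nonneg th x : 0 <= cos th -> 0 <= H_integrand_neg l1 l2 c th x.
Proof.
  intros Hcos; pose proof c_ge_4; pose proof (speed_bounds th x).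
  apply Rdiv_le_0_compat; nra.
Qed.

Lemma H_integrand_pos_continuous th x : continuous (H_integrand_pos l1 l2 c th) x.
Proof.
  pose proof c_ge_4; pose proof (speed_bounds th x); pose proof (speed_derivable th x).
  apply (ex_derive_continuous (H_integrand_pos l1 l2 c th)).
  unfold H_integrand_pos, Bang; auto_derive; repeat split; auto; nra.
Qed.

Lemma H_integrand_neg_continuous th x : continuous (H_integrand_neg l1 l2 c th) x.
Proof.
  pose proof c_ge_4; pose proof (speed_bounds th x); pose proof (speed_derivable th x).
  apply (ex_derive_continuous (H_integrand_neg l1 l2 c th)).
  unfold H_integrand_neg; auto_derive; repeat split; auto; nra.
Qed.

Lemma H_integrand_continuous th x : continuous (H_integrand l1 l2 c th) x.
Proof.
  pose proof c_ge_4; pose proof (speed_bounds th x); pose proof (speed_derivable th x).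
  pose proof (Bang_bounds x).
  apply (ex_derive_continuous (H_integrand l1 l2 c th)).
  unfold H_integrand, Bang in *; auto_derive; repeat split; auto; nra.
Qed.

Lemma H_integrand_PI2_pos x : 0 < H_integrand l1 l2 c (PI / 2) x.
Proof.
  pose proof c_ge_4; pose proof (speed_bounds (PI / 2) x); pose proof (Bang_bounds x).
  rewrite H_integrand_split; unfold H_integrand_pos, H_integrand_neg, Dc.
  rewrite cos_PI2, sin_PI2.
  replace (2 * c * 0 / (F (PI / 2) x * (c + F (PI / 2) x))) with 0 by (field; nra).
  rewrite Rminus_0_r; apply Rdiv_lt_0_compat; [|nra].
  apply Rmult_lt_0_compat; [apply Rmult_lt_0_compat|]; [|nra|nra].
  apply pow_lt, Rdiv_lt_0_compat; lra.
Qed.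

Lemma H_integrand_PI3_neg x : H_integrand l1 l2 c (PI / 3) x < 0.
Proof.
  pose proof c_ge_4; pose proof (speed_bounds (PI / 3) x).
  pose proof (sin_sq_le_1 (PI / 3)); pose proof (Dc_sq_mul_c_sq (PI / 3)).
  rewrite H_integrand_split.
  pose proof (H_integrand_pos_bounds (PI / 3) x) as [_ Hpos].
  assert (Hneg : / (6 * c) <= H_integrand_neg l1 l2 c (PI / 3) x).
  { unfold H_integrand_neg; rewrite cos_PI3.
    apply Rle_div_r; [nra|].
    replace (/ (6 * c) * (F (PI / 3) x * (c + F (PI / 3) x)))
      with (F (PI / 3) x * (c + F (PI / 3) x) / (6 * c)) by (field; lra).
    apply Rle_div_l; nra. }
  assert (4 * D (PI / 3) ^ 2 * l1 ^ 2 / c < / (6 * c)).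
  { apply (Rmult_lt_reg_r (6 * c ^ 3)); [nra|].
    replace (4 * D (PI / 3) ^ 2 * l1 ^ 2 / c * (6 * c ^ 3))
      with (24 * l1 ^ 2 * (D (PI / 3) ^ 2 * c ^ 2)) by (field; lra).
    replace (/ (6 * c) * (6 * c ^ 3)) with (c ^ 2) by (field; lra).
    nra. }
  lra.
Qed.

Lemma Dc_sq_lipschitz t1 t2 : Rabs (D t1 ^ 2 - D t2 ^ 2) <= Rabs (t1 - t2).
Proof.
  pose proof c_ge_4; pose proof (sin_sq_lipschitz t1 t2).
  replace (D t1 ^ 2 - D t2 ^ 2) with ((sin t1 ^ 2 - sin t2 ^ 2) / c ^ 2)
    by (unfold Dc; field; lra).
  replace (Rabs (t1 - t2)) with (Rabs (t1 - t2) / 1) by field.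
  apply Rabs_div_le; nra.
Qed.

Lemma speed2_lipschitz t1 t2 x :
  Rabs (speed2 l1 l2 c t1 x - speed2 l1 l2 c t2 x) <= (2 * l1 ^ 2 + l1 ^ 4) * Rabs (t1 - t2).
Proof.
  pose proof (Bang_bounds x); pose proof (cos_lipschitz t1 t2); pose proof (Dc_sq_lipschitz t1 t2).
  replace (speed2 l1 l2 c t1 x - speed2 l1 l2 c t2 x)
    with (2 * B x * (cos t1 - cos t2) - B x ^ 2 * (D t1 ^ 2 - D t2 ^ 2))
    by (unfold speed2; ring).
  eapply Rle_trans; [apply Rabs_triang|]; rewrite Rabs_Ropp, !Rabs_mult.
  rewrite (Rabs_right 2), (Rabs_right (B x)), (Rabs_right (B x ^ 2)) by nra.
  assert (B x ^ 2 <= l1 ^ 4) by nra.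
  pose proof (Rabs_pos (t1 - t2)); nra.
Qed.

Lemma speed_lipschitz t1 t2 x :
  Rabs (F t1 x - F t2 x) <= (2 * l1 ^ 2 + l1 ^ 4) / c * Rabs (t1 - t2).
Proof.
  pose proof c_ge_4; pose proof (speed_bounds t1 x); pose proof (speed_bounds t2 x).
  pose proof (speed_sq t1 x); pose proof (speed_sq t2 x).
  replace (F t1 x - F t2 x)
    with ((speed2 l1 l2 c t1 x - speed2 l1 l2 c t2 x) / (F t1 x + F t2 x))
    by (field_simplify_eq; nra).
  replace ((2 * l1 ^ 2 + l1 ^ 4) / c * Rabs (t1 - t2))
    with ((2 * l1 ^ 2 + l1 ^ 4) * Rabs (t1 - t2) / c) by (field; lra).
  apply Rabs_div_le; [lra | apply speed2_lipschitz].
Qed.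

Lemma H_integrand_lipschitz : exists L, forall t1 t2 x,
  Rabs (H_integrand l1 l2 c t1 x - H_integrand l1 l2 c t2 x) <= L * Rabs (t1 - t2).
Proof.
  set (K := (2 * l1 ^ 2 + l1 ^ 4) / c).
  exists ((2 * c * l1 ^ 4 + (l1 ^ 2 + c ^ 2) * K) / (l2 ^ 2 * (c / 2) * (c / 2))).
  intros t1 t2 x.
  pose proof c_ge_4; pose proof (speed_bounds t1 x); pose proof (speed_bounds t2 x).
  pose proof (Bang_bounds x); pose proof (Dc_sq_Bang_sq_le t2 x).
  pose proof (Dc_sq_lipschitz t1 t2).
  assert (HF : Rabs (F t2 x - F t1 x) <= K * Rabs (t1 - t2))
    by (rewrite Rabs_minus_sym; apply speed_lipschitz).
  pose proof (Rabs_pos (t1 - t2)).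
  (* H_integrand = N / (B phi') - c / B, and c / B does not depend on theta. *)
  set (N := fun t => D t ^ 2 * B x ^ 2 + c ^ 2).
  replace (H_integrand l1 l2 c t1 x - H_integrand l1 l2 c t2 x)
    with (((N t1 - N t2) * F t2 x + N t2 * (F t2 x - F t1 x)) / (B x * F t1 x * F t2 x))
    by (unfold H_integrand, N; field; repeat split; nra).
  replace ((2 * c * l1 ^ 4 + (l1 ^ 2 + c ^ 2) * K) / (l2 ^ 2 * (c / 2) * (c / 2))
           * Rabs (t1 - t2))
    with ((l1 ^ 4 * Rabs (t1 - t2) * (2 * c) + (l1 ^ 2 + c ^ 2) * (K * Rabs (t1 - t2)))
          / (l2 ^ 2 * (c / 2) * (c / 2))) by (field; lra).
  apply Rabs_div_le.
  - split; [apply Rmult_lt_0_compat; [apply Rmult_lt_0_compat|]; nra|].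
    apply Rmult_le_compat; [nra | lra | apply Rmult_le_compat; nra | lra].
  - assert (HN : Rabs (N t1 - N t2) <= l1 ^ 4 * Rabs (t1 - t2)).
    { replace (N t1 - N t2) with (B x ^ 2 * (D t1 ^ 2 - D t2 ^ 2)) by (unfold N; ring).
      rewrite Rabs_mult, (Rabs_right (B x ^ 2)) by nra.
      apply Rmult_le_compat; [nra | apply Rabs_pos | | assumption].
      replace (l1 ^ 4) with (l1 ^ 2 * l1 ^ 2) by ring; apply Rmult_le_compat; nra. }
    assert (HN2 : Rabs (N t2) <= l1 ^ 2 + c ^ 2)
      by (unfold N; rewrite Rabs_right; nra).
    eapply Rle_trans; [apply Rabs_triang|]; rewrite !Rabs_mult, (Rabs_right (F t2 x)) by lra.
    apply Rplus_le_compat; apply Rmult_le_compat; try apply Rabs_pos; lra.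
Qed.

Lemma H_angle_continuity : continuity (H_angle l1 l2 c).
Proof.
  destruct H_integrand_lipschitz as [L HL].
  apply (continuity_RInt_param (H_integrand l1 l2 c) L 0 PI);
    [pose proof PI_RGT_0; lra | |exact HL].
  exact H_integrand_continuous.
Qed.

Lemma H_angle_PI3_neg : H_angle l1 l2 c (PI / 3) < 0.
Proof.
  pose proof PI_RGT_0.
  apply Rlt_le_trans with (RInt (fun _ => 0) 0 PI).
  - apply RInt_lt; [lra | intros; apply continuous_const | |].
    + intros; apply H_integrand_continuous.
    + intros; apply H_integrand_PI3_neg.
  - rewrite RInt_const; apply Req_le, Rmult_0_r.
Qed.

Lemma H_angle_PI2_pos : 0 < H_angle l1 l2 c (PI / 2).
Proof.
  apply RInt_gt_0; [apply PI_RGT_0 | |].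
  - intros; apply H_integrand_PI2_pos.
  - intros; apply H_integrand_continuous.
Qed.

Lemma H_angle_root :
  exists th, PI / 3 < th < PI / 2 /\ H_angle l1 l2 c th = 0.
Proof.
  pose proof PI_RGT_0; pose proof H_angle_PI3_neg; pose proof H_angle_PI2_pos.
  destruct (IVT (H_angle l1 l2 c) (PI / 3) (PI / 2) H_angle_continuity) as [th [Hth E]];
    [lra | assumption | assumption |].
  exists th; split; [|exact E].
  destruct Hth as [[Hlo | Hlo] [Hhi | Hhi]]; subst; split; lra.
Qed.

Section FixedAngle.

Variable th : R.

Local Notation phi := (phi_of l1 l2 c th).
Local Notation Fth := (speed l1 l2 c th).

Lemma phi_of_spec : is_phi_sol l1 l2 c th phi.
Proof.
  apply (epsilon_spec (inhabits (fun _ => 0)) (is_phi_sol l1 l2 c th)).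
  exact (ode_solution_exists Fth _ _ (speed_continuous th) c_half_pos (speed_bounds th)).
Qed.

Lemma ode_time_phi u : ode_time Fth (phi u) = u.
Proof.
  destruct phi_of_spec as [H0 Hd].
  exact (ode_time_solution Fth _ _ (speed_continuous th) c_half_pos (speed_bounds th) phi H0 Hd u).
Qed.

Lemma U_of_spec : phi (U_of l1 l2 c th) = PI.
Proof.
  destruct (epsilon_spec (inhabits 0) (fun U => 0 < U /\ phi U = PI)) as [_ HU];
    [|exact HU].
  exists (ode_time Fth PI); split.
  - rewrite <- (ode_time_0 Fth).
    exact (ode_time_lt Fth _ _ (speed_continuous th) c_half_pos (speed_bounds th) 0 PI PI_RGT_0).
  - apply (ode_time_inj Fth _ _ (speed_continuous th) c_half_pos (speed_bounds th)), ode_time_phi.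
Qed.

Lemma phase_of_phi u :
  Dc c th * f_of l1 l2 c th u + c * G_of l1 l2 c th u = phase l1 l2 c th (phi u).
Proof.
  destruct phi_of_spec as [H0 Hd].
  assert (Hphi : forall s, continuous phi s)
    by (intros s; apply (ex_derive_continuous phi); eexists; apply Hd).
  revert u.
  apply (eq_of_derive_eq _ _
    (fun u => Dc c th * (Dc c th * B_of l1 l2 c th u)
              + c * ((c - phid_of l1 l2 c th u) / B_of l1 l2 c th u))
    (fun u => Fth (phi u) * H_integrand l1 l2 c th (phi u)) 0).
  - intros u; apply (is_derive_plus (fun u => Dc c th * f_of l1 l2 c th u)
                                    (fun u => c * G_of l1 l2 c th u));
      apply is_derive_scal; unfold f_of, G_of.
    + apply (is_derive_RInt_upper (fun s => Dc c th * B_of l1 l2 c th s)); intros s.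
      apply (continuous_comp phi (fun x => Dc c th * B x)); [apply Hphi|].
      apply (ex_derive_continuous (fun x => Dc c th * B x)); unfold Bang; auto_derive; exact I.
    + apply (is_derive_RInt_upper (fun s => (c - phid_of l1 l2 c th s) / B_of l1 l2 c th s)).
      intros s; apply (continuous_comp phi (fun x => (c - Fth x) / B x)); [apply Hphi|].
      pose proof (speed_derivable th (phi s)); pose proof (Bang_bounds (phi s)).
      apply (ex_derive_continuous (fun x => (c - Fth x) / B x)); unfold Bang in *.
      auto_derive; repeat split; auto; nra.
  - intros u; apply (is_derive_comp (phase l1 l2 c th) phi); [|apply Hd].
    apply is_derive_RInt_upper, H_integrand_continuous.
  - intros u; pose proof c_ge_4.
    pose proof (speed_bounds th (phi u)); pose proof (Bang_bounds (phi u)).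
    change (phid_of l1 l2 c th u) with (Fth (phi u)).
    change (B_of l1 l2 c th u) with (B (phi u)).
    unfold H_integrand; field; nra.
  - rewrite H0; unfold f_of, G_of, phase; rewrite !RInt_point_0; ring.
Qed.

Lemma H_of_eq_H_angle : H_of l1 l2 c th = H_angle l1 l2 c th.
Proof. unfold H_of, H_angle; rewrite phase_of_phi, U_of_spec; reflexivity. Qed.

End FixedAngle.

Lemma sqrt2_l1_lt_c : sqrt 2 * l1 < c.
Proof.
  pose proof (sqrt_sqrt 2 ltac:(lra)); pose proof (sqrt_pos 2).
  assert (sqrt 2 < 2) by nra.
  assert (0 < l1) by lra; nra.
Qed.

Lemma theta_tilde_spec :
  0 < theta_tilde l1 l2 c < PI / 2 /\ H_of l1 l2 c (theta_tilde l1 l2 c) = 0.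
Proof.
  destruct H_angle_root as [th [Hth E]].
  destruct (epsilon_spec (inhabits 0)
    (fun th => 0 < th < PI / 2 /\ th < theta_plus l1 c /\ H_of l1 l2 c th = 0))
    as [Hrange [_ HH]]; [|split; assumption].
  pose proof PI_RGT_0; pose proof PI2_RGT_0.
  exists th; split; [lra | split; [|rewrite H_of_eq_H_angle; exact E]].
  unfold theta_plus; destruct (Rlt_dec (sqrt 2 * l1) c) as [_ | Hn]; [lra|].
  exfalso; apply Hn, sqrt2_l1_lt_c.
Qed.

Section Phase.

Variable th : R.
Hypothesis cos_th_nonneg : 0 <= cos th.
Hypothesis H_angle_zero : H_angle l1 l2 c th = 0.

Lemma phase_add_PI x : phase l1 l2 c th (x + PI) = phase l1 l2 c th x.
Proof.
  unfold H_angle, phase in *.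
  rewrite RInt_add_period, H_angle_zero; [ring | |].
  - apply H_integrand_continuous.
  - apply H_integrand_add_PI.
Qed.

Lemma phase_split y : phase l1 l2 c th y =
  RInt (H_integrand_pos l1 l2 c th) 0 y - RInt (H_integrand_neg l1 l2 c th) 0 y.
Proof.
  unfold phase; rewrite <- (RInt_minus (V := R_CompleteNormedModule));
    try (apply ex_RInt_of_continuous;
         first [apply H_integrand_pos_continuous | apply H_integrand_neg_continuous]).
  apply RInt_ext; intros x _; apply H_integrand_split.
Qed.

Lemma phase_bound x : Rabs (phase l1 l2 c th x) <= PI * (4 * Dc c th ^ 2 * l1 ^ 2 / c).
Proof.
  destruct (periodic_value_in_period (phase l1 l2 c th) PI PI_RGT_0 phase_add_PI x)
    as [y [Hy ->]].
  rewrite phase_split.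
  apply Rabs_RInt_sub_le_of_balanced; auto.
  - apply H_integrand_pos_continuous.
  - apply H_integrand_neg_continuous.
  - apply H_integrand_pos_bounds.
  - intros; apply H_integrand_neg_nonneg, cos_th_nonneg.
  - pose proof (phase_split PI); fold (H_angle l1 l2 c th) in *; lra.
Qed.

End Phase.

(* On {x3 = 0}, D v = G(u), so D A = D f + c G = phase (phi u), which H = 0
   keeps of size O(D^2 / c). *)
Lemma catenoid_amplitude_bound u v :
  cat_x3 l1 l2 c u v = 0 ->
  Rabs (f_of l1 l2 c (theta_tilde l1 l2 c) u + c * v) <= 1.
Proof.
  unfold cat_x3; cbv zeta; intros Hx3.
  destruct theta_tilde_spec as [Hth HH]; set (th := theta_tilde l1 l2 c) in *.
  pose proof c_ge_4; pose proof PI_4; pose proof PI_RGT_0.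
  assert (Hsin : 0 < sin th <= 1) by (split; [apply sin_gt_0 | apply SIN_bound]; lra).
  assert (HDc : D th * c = sin th) by (unfold Dc; field; lra).
  assert (HD : 0 < D th) by (unfold Dc; apply Rdiv_lt_0_compat; lra).
  assert (Hv : D th * v = G_of l1 l2 c th u).
  { assert (0 < l1 * l2) by (apply Rmult_lt_0_compat; lra).
    apply (Rmult_eq_reg_l (l1 * l2)); lra. }
  rewrite H_of_eq_H_angle in HH.
  pose proof (phase_bound th (cos_ge_0 th ltac:(lra) ltac:(lra)) HH (phi_of l1 l2 c th u)) as Hph.
  rewrite <- phase_of_phi, <- Hv in Hph.
  replace (D th * f_of l1 l2 c th u + c * (D th * v))
    with (D th * (f_of l1 l2 c th u + c * v)) in Hph by ring.
  rewrite Rabs_mult, (Rabs_right (D th)) in Hph by lra.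
  apply (Rmult_le_reg_l (D th)); [exact HD|].
  eapply Rle_trans; [exact Hph|].
  replace (PI * (4 * D th ^ 2 * l1 ^ 2 / c)) with (D th * (4 * PI * l1 ^ 2 * D th / c))
    by (field; lra).
  apply Rmult_le_compat_l; [lra|].
  apply Rle_div_l; [lra|].
  assert (Hl1 : 16 * l1 ^ 2 <= c ^ 2) by nra.
  assert (H4 : 4 * PI * l1 ^ 2 * (D th * c) <= c * c).
  { rewrite HDc; assert (0 <= l1 ^ 2) by nra.
    apply Rle_trans with (16 * l1 ^ 2); [|nra].
    replace (16 * l1 ^ 2) with (4 * 4 * l1 ^ 2 * 1) by ring.
    apply Rmult_le_compat; [nra | lra | nra | lra]. }
  apply (Rmult_le_reg_r c); [lra|]; lra.
Qed.

Lemma catenoid_prefactor_bound th u :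
  Rabs (- / ((c ^ 2 + l1 ^ 2 * l2 ^ 2 * D th ^ 2) * B_of l1 l2 c th u)) <= 1 / (c ^ 2 * l2 ^ 2).
Proof.
  pose proof c_ge_4; pose proof (Bang_bounds (phi_of l1 l2 c th u)).
  change (B_of l1 l2 c th u) with (B (phi_of l1 l2 c th u)).
  rewrite Rabs_Ropp, <- (Rmult_1_l (/ _)).
  apply Rabs_div_le; [split; [apply Rmult_lt_0_compat; nra|] | rewrite Rabs_R1; lra].
  apply Rmult_le_compat; [nra | nra | |lra].
  assert (0 <= l1 ^ 2 * l2 ^ 2 * D th ^ 2) by (apply Rmult_le_pos; nra); lra.
Qed.

Lemma Dc_scaled_abs_le th : Rabs (l1 * l2 * D th) <= c.
Proof.
  pose proof c_ge_4; pose proof (Dc_abs_le th).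
  rewrite !Rabs_mult, !Rabs_right by lra.
  apply Rle_trans with (l1 * l2 / c).
  - replace (l1 * l2 / c) with (l1 * l2 * (1 / c)) by (field; lra).
    apply Rmult_le_compat_l; nra.
  - assert (l1 * l2 <= l1 ^ 2) by nra; apply Rle_div_l; nra.
Qed.

Lemma fd_speed_sum_bound th u :
  Rabs (fd_of l1 l2 c th u / l1) + Rabs ((c - phid_of l1 l2 c th u) / l1)
  + Rabs ((c - phid_of l1 l2 c th u) / l2) + Rabs (fd_of l1 l2 c th u / l2)
  <= 8 * l1 ^ 2 / (l2 * c).
Proof.
  pose proof c_ge_4.
  set (fd := fd_of l1 l2 c th u); set (cp := c - phid_of l1 l2 c th u).
  assert (Hdiv : forall a, Rabs (a / l1) <= Rabs a / l2 /\ Rabs (a / l2) <= Rabs a / l2)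
    by (intros a; split; apply Rabs_div_le; lra).
  destruct (Hdiv fd); destruct (Hdiv cp).
  assert (Rabs fd <= l1 ^ 2 / c) by apply fd_of_bound.
  assert (Rabs cp <= 3 * l1 ^ 2 / c) by apply c_sub_speed_bound.
  assert (Rabs fd / l2 + Rabs cp / l2 <= 4 * l1 ^ 2 / (l2 * c)).
  { replace (Rabs fd / l2 + Rabs cp / l2) with ((Rabs fd + Rabs cp) / l2) by (field; lra).
    replace (4 * l1 ^ 2 / (l2 * c)) with ((l1 ^ 2 / c + 3 * l1 ^ 2 / c) / l2) by (field; lra).
    unfold Rdiv at 1 3; apply Rmult_le_compat_r; [left; apply Rinv_0_lt_compat|]; lra. }
  lra.
Qed.

Lemma catenoid_level0_coord_bounds u v :
  cat_x3 l1 l2 c u v = 0 ->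
  Rabs (cat_x1 l1 l2 c u v) <= 24 * l1 ^ 2 / (l2 ^ 3 * c ^ 2) /\
  Rabs (cat_x2 l1 l2 c u v) <= 24 * l1 ^ 2 / (l2 ^ 3 * c ^ 2).
Proof.
  intros Hx3.
  pose proof (catenoid_amplitude_bound u v Hx3) as HA.
  unfold cat_x1, cat_x2; cbv zeta; rewrite Hx3, cos_0, sin_0.
  set (th := theta_tilde l1 l2 c) in *.
  set (A := f_of l1 l2 c th u + c * v) in *.
  set (ph := phi_of l1 l2 c th u).
  set (fd := fd_of l1 l2 c th u); set (cp := c - phid_of l1 l2 c th u).
  set (E := l1 * l2 * D th).
  set (K := - / ((c ^ 2 + l1 ^ 2 * l2 ^ 2 * D th ^ 2) * B_of l1 l2 c th u)).
  pose proof c_ge_4.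
  assert (HK : Rabs K <= 1 / (c ^ 2 * l2 ^ 2)) by apply catenoid_prefactor_bound.
  assert (HE : Rabs E <= c) by apply Dc_scaled_abs_le.
  assert (Hsum : Rabs (fd / l1) + Rabs (cp / l1) + Rabs (cp / l2) + Rabs (fd / l2)
                 <= 8 * l1 ^ 2 / (l2 * c)) by apply fd_speed_sum_bound.
  destruct (cosh_sinh_bound A HA) as [Hch Hsh].
  assert (Hcoef : forall t e h,
            Rabs t <= 1 -> Rabs e <= c -> Rabs h <= 3 -> Rabs (t * e * h) <= 3 * c)
    by (intros t e h Ht He Hh; replace (3 * c) with (1 * c * 3) by ring;
        apply Rabs_mul3_le; assumption).
  assert (Hc : Rabs c <= c) by (rewrite Rabs_right; lra).
  assert (Hcos : Rabs (cos ph) <= 1 /\ Rabs (- cos ph) <= 1)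
    by (rewrite Rabs_Ropp; split; apply Rabs_le_between, COS_bound).
  assert (Hsin : Rabs (sin ph) <= 1 /\ Rabs (- sin ph) <= 1)
    by (rewrite Rabs_Ropp; split; apply Rabs_le_between, SIN_bound).
  assert (Hfinal : 1 / (c ^ 2 * l2 ^ 2) * (3 * c) * (8 * l1 ^ 2 / (l2 * c))
                   = 24 * l1 ^ 2 / (l2 ^ 3 * c ^ 2)) by (field; lra).
  assert (0 <= 1 / (c ^ 2 * l2 ^ 2) * (3 * c))
    by (apply Rmult_le_pos; [apply Rdiv_le_0_compat; [lra | apply Rmult_lt_0_compat; nra] | lra]).
  rewrite <- Hfinal; split;
    (eapply Rle_trans; [|apply Rmult_le_compat_l; [assumption | exact Hsum]]).
  - match goal with |- Rabs (K * ?e) <= _ =>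
      replace e with ((cos ph * c * cosh A) * (fd / l1) + (- sin ph * c * sinh A) * (cp / l1)
                 + (- cos ph * E * cosh A) * (cp / l2) + (- sin ph * E * sinh A) * (fd / l2))
        by (field; lra) end.
    apply Rabs_lincomb4_le; try apply Hcoef; tauto.
  - match goal with |- Rabs (K * ?e) <= _ =>
      replace e with ((cos ph * E * sinh A) * (fd / l1) + (- sin ph * E * cosh A) * (cp / l1)
                 + (cos ph * c * sinh A) * (cp / l2) + (sin ph * c * cosh A) * (fd / l2))
        by (field; lra) end.
    apply Rabs_lincomb4_le; try apply Hcoef; tauto.
Qed.

Lemma catenoid_level0_radius_bound u v :
  cat_x3 l1 l2 c u v = 0 ->
  sqrt (cat_x1 l1 l2 c u v ^ 2 + cat_x2 l1 l2 c u v ^ 2) <= 48 * l1 ^ 2 / (l2 ^ 3 * c).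
Proof.
  intros Hx3; destruct (catenoid_level0_coord_bounds u v Hx3) as [H1 H2].
  eapply Rle_trans; [exact (sqrt_sum_sq_le _ _ _ H1 H2)|].
  pose proof c_ge_4; assert (0 <= l1 ^ 2) by nra.
  assert (0 < l2 ^ 3) by (apply pow_lt; lra).
  replace (2 * (24 * l1 ^ 2 / (l2 ^ 3 * c ^ 2))) with (48 * l1 ^ 2 / (l2 ^ 3 * c) * / c)
    by (field; lra).
  rewrite <- (Rmult_1_r (48 * l1 ^ 2 / (l2 ^ 3 * c))) at 2.
  apply Rmult_le_compat_l.
  - apply Rdiv_le_0_compat; [lra | apply Rmult_lt_0_compat; lra].
  - rewrite <- Rinv_1; apply Rinv_le_contravar; lra.
Qed.

End Catenoid.

Theorem proposition6p2 (l1 l2 : R)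
  (Hl : (l1 > l2 /\ l2 > 0) \/ (l1 = 1 /\ l2 = 1)) :
  forall eps : R, 0 < eps ->
  exists C : R, forall c : R, C < c ->
    forall u v : R, cat_x3 l1 l2 c u v = 0 ->
      sqrt (cat_x1 l1 l2 c u v ^ 2 + cat_x2 l1 l2 c u v ^ 2) <= eps.
Proof.
  intros eps Heps.
  assert (Hl2 : 0 < l2) by (destruct Hl; lra).
  assert (Hl12 : l2 <= l1) by (destruct Hl; lra).
  assert (Hl2_3 : 0 < l2 ^ 3) by (apply pow_lt; lra).
  exists (Rmax (4 + 4 * l1 ^ 2) (48 * l1 ^ 2 / (l2 ^ 3 * eps))).
  intros c Hc u v Hx3.
  apply Rmax_Rlt in Hc as [Hc_large Hc_eps].
  eapply Rle_trans;
    [exact (catenoid_level0_radius_bound l1 l2 c Hl2 Hl12 (Rlt_le _ _ Hc_large) u v Hx3)|].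
  apply Rle_div_l; [nra|].
  replace (48 * l1 ^ 2) with (48 * l1 ^ 2 / (l2 ^ 3 * eps) * (l2 ^ 3 * eps)) by (field; lra).
  replace (eps * (l2 ^ 3 * c)) with (c * (l2 ^ 3 * eps)) by ring.
  apply Rmult_le_compat_r; nra.
Qed.
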